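(* A topological vector space $E$ (over $\mathbb{R}$ or $\mathbb{C}$) is $p$-normed for some $0<p\le1$ if and only if $E$ is Fréchet–Urysohn and admits a fundamental sequence of bounded sets.
   Context: A tvs is $p$-normed if its topology is generated by a $p$-norm, i.e. a map $\|\cdot\|:E\to[0,\infty)$ with $\|x\|=0$ iff $x=0$, $\|\lambda x\|=|\lambda|^p\|x\|$ and $\|x+y\|\le\|x\|+\|y\|$. A fundamental sequence of bounded sets is a sequence $(B_n)$ of bounded subsets of $E$ such that every bounded subset of $E$ is contained in some $B_n$. A space is Fréchet–Urysohn if whenever $x\in\overline{A}$ there is a sequence in $A$ converging to $x$. *)

From Stdlib Require Import Reals.
Open Scope R_scope.

Inductive field_choice := FR | FC.

Definition scal (k : field_choice) : Type :=
  match k with FR => R | FC => (R * R)%type end.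

Definition scal_add (k : field_choice) : scal k -> scal k -> scal k :=
  match k with
  | FR => fun a b => a + b
  | FC => fun a b => (fst a + fst b, snd a + snd b)
  end.

Definition scal_mul (k : field_choice) : scal k -> scal k -> scal k :=
  match k with
  | FR => fun a b => a * b
  | FC => fun a b => (fst a * fst b - snd a * snd b, fst a * snd b + snd a * fst b)
  end.

Definition scal_one (k : field_choice) : scal k :=
  match k with FR => 1 | FC => (1, 0) end.

Definition scal_opp (k : field_choice) : scal k -> scal k :=
  match k with FR => fun a => - a | FC => fun a => (- fst a, - snd a) end.

Definition scal_abs (k : field_choice) : scal k -> R :=
  match k with
  | FR => fun a => Rabs a
  | FC => fun a => sqrt (fst a * fst a + snd a * snd a)
  end.

Definition scal_ofR (k : field_choice) : R -> scal k :=
  match k with FR => fun t => t | FC => fun t => (t, 0) end.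

(** a ^ p for a >= 0, with the convention 0 ^ p = 0 (p > 0). *)
Definition powp (a p : R) : R :=
  if Req_EM_T a 0 then 0 else Rpower a p.

Section TVS.
Variable k : field_choice.
Variable E : Type.
Variable add : E -> E -> E.
Variable zero : E.
Variable opp : E -> E.
Variable smul : scal k -> E -> E.
Variable is_open : (E -> Prop) -> Prop.

Definition sub (x y : E) : E := add x (opp y).

Definition is_vector_space : Prop :=
  (forall x y z, add x (add y z) = add (add x y) z) /\
  (forall x y, add x y = add y x) /\
  (forall x, add zero x = x) /\
  (forall x, add (opp x) x = zero) /\
  (forall a b x, smul (scal_mul k a b) x = smul a (smul b x)) /\
  (forall x, smul (scal_one k) x = x) /\
  (forall a x y, smul a (add x y) = add (smul a x) (smul a y)) /\
  (forall a b x, smul (scal_add k a b) x = add (smul a x) (smul b x)).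

Definition is_topology : Prop :=
  is_open (fun _ => True) /\
  (forall U V, is_open U -> is_open V -> is_open (fun x => U x /\ V x)) /\
  (forall F : (E -> Prop) -> Prop,
      (forall U, F U -> is_open U) -> is_open (fun x => exists U, F U /\ U x)).

Definition is_hausdorff : Prop :=
  forall x y, x <> y ->
    exists U V, is_open U /\ is_open V /\ U x /\ V y /\
                (forall z, U z -> V z -> False).

Definition add_continuous : Prop :=
  forall x y W, is_open W -> W (add x y) ->
    exists U V, is_open U /\ is_open V /\ U x /\ V y /\
                (forall u v, U u -> V v -> W (add u v)).

Definition smul_continuous : Prop :=
  forall (a : scal k) x W, is_open W -> W (smul a x) ->
    exists d U, 0 < d /\ is_open U /\ U x /\
      (forall (b : scal k) u,
          scal_abs k (scal_add k b (scal_opp k a)) < d -> U u -> W (smul b u)).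

Definition is_tvs : Prop :=
  is_vector_space /\ is_topology /\ is_hausdorff /\
  add_continuous /\ smul_continuous.

Definition is_p_norm (p : R) (N : E -> R) : Prop :=
  (forall x, 0 <= N x) /\
  (forall x, N x = 0 <-> x = zero) /\
  (forall a x, N (smul a x) = powp (scal_abs k a) p * N x) /\
  (forall x y, N (add x y) <= N x + N y).

Definition topology_generated_by (N : E -> R) : Prop :=
  forall U, is_open U <->
    (forall x, U x -> exists eps, 0 < eps /\ forall y, N (sub y x) < eps -> U y).

Definition p_normed : Prop :=
  exists p N, 0 < p /\ p <= 1 /\ is_p_norm p N /\ topology_generated_by N.

Definition bounded (B : E -> Prop) : Prop :=
  forall U, is_open U -> U zero ->
    exists s, 0 < s /\
      forall t, s < t -> forall b, B b -> exists u, U u /\ b = smul (scal_ofR k t) u.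

Definition fundamental_sequence_of_bounded_sets (Bn : nat -> E -> Prop) : Prop :=
  (forall n, bounded (Bn n)) /\
  (forall B, bounded B -> exists n, forall x, B x -> Bn n x).

Definition has_fundamental_sequence_of_bounded_sets : Prop :=
  exists Bn, fundamental_sequence_of_bounded_sets Bn.

Definition in_closure (A : E -> Prop) (x : E) : Prop :=
  forall U, is_open U -> U x -> exists y, U y /\ A y.

Definition seq_converges (s : nat -> E) (x : E) : Prop :=
  forall U, is_open U -> U x -> exists n0, forall n, (n0 <= n)%nat -> U (s n).

Definition frechet_urysohn : Prop :=
  forall (A : E -> Prop) x, in_closure A x ->
    exists s : nat -> E, (forall n, A (s n)) /\ seq_converges s x.

End TVS.

(* If N is a p-norm, its balls around a point form a countable neighbourhood base, so E is
   Fréchet–Urysohn, and the sublevel sets [N x <= n] form a fundamental sequence of bounded sets.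

   Conversely, it suffices to find a bounded neighbourhood U0 of 0 (Aoki–Rolewicz): then
   U0 + U0 is contained in C U0 for some C >= 2, and with p = ln 2 / ln C the gauge
   N x = inf { sum t_i^p : x = sum x_i, x_i in t_i U0 } is a p-norm generating the topology.
   The key estimate rounds each t_i up to a power C^-m, whose p-th power is 2^-m, and then
   repeatedly merges two pieces of the same level m into one piece of level m - 1.

   If no neighbourhood of 0 were bounded, take a null sequence v_n <> 0, an increasing
   fundamental sequence (B_n) with v_n in B_n eventually, and disjoint neighbourhoods U_n of 0
   and V_n of v_n.  The set of points y in V_n with y - v_n outside B_n - B_n has 0 in its
   closure, yet a sequence in it converging to 0 is bounded, hence lies in some B_m, and is
   eventually in U_0, ..., U_(m-1); a term y in V_n then contradicts U_n /\ V_n = {} if n < m,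
   and y - v_n in B_n - B_n if n >= m. *)

From Pilot Require Import Defs.
From Stdlib Require Import Reals Lra Lia Psatz ZArith List Permutation.
From Stdlib Require Import ClassicalEpsilon FunctionalExtensionality PropExtensionality.
Open Scope R_scope.

Definition scal_zero (k : field_choice) : scal k := scal_ofR k 0.

Lemma scal_subr0 k (a : scal k) : scal_add k a (scal_opp k (scal_zero k)) = a.
Proof. destruct k; unfold scal_zero; simpl; [ring | destruct a; simpl; f_equal; ring]. Qed.

Lemma scal_subrr k (a : scal k) : scal_add k a (scal_opp k a) = scal_zero k.
Proof. destruct k; unfold scal_zero; simpl; [ring | destruct a; simpl; f_equal; ring]. Qed.

Lemma scal_add00 k : scal_add k (scal_zero k) (scal_zero k) = scal_zero k.
Proof. destruct k; unfold scal_zero; simpl; [ring | f_equal; ring]. Qed.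

Lemma scal_mulC k (a b : scal k) : scal_mul k a b = scal_mul k b a.
Proof. destruct k; simpl; [ring | destruct a, b; simpl; f_equal; ring]. Qed.

Lemma scal_mul1l k (a : scal k) : scal_mul k (scal_one k) a = a.
Proof. destruct k; simpl; [ring | destruct a; simpl; f_equal; ring]. Qed.

Lemma scal_mul_ofR k s t : scal_mul k (scal_ofR k s) (scal_ofR k t) = scal_ofR k (s * t).
Proof. destruct k; simpl; [reflexivity | f_equal; ring]. Qed.

Lemma scal_one_ofR k : scal_one k = scal_ofR k 1.
Proof. destruct k; reflexivity. Qed.

Lemma scal_abs_ofR k t : scal_abs k (scal_ofR k t) = Rabs t.
Proof.
  destruct k; simpl; [reflexivity|].
  replace (t * t + 0 * 0) with (Rsqr t) by (unfold Rsqr; ring). apply sqrt_Rsqr_abs.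
Qed.

Lemma scal_abs_ge0 k (a : scal k) : 0 <= scal_abs k a.
Proof. destruct k; simpl; [apply Rabs_pos | apply sqrt_pos]. Qed.

Lemma scal_abs_mul k (a b : scal k) :
  scal_abs k (scal_mul k a b) = scal_abs k a * scal_abs k b.
Proof.
  destruct k; simpl; [apply Rabs_mult|].
  destruct a as [a1 a2], b as [b1 b2]; simpl.
  rewrite <- sqrt_mult_alt by nra. f_equal. ring.
Qed.

Lemma scal_abs_zero k : scal_abs k (scal_zero k) = 0.
Proof. unfold scal_zero. rewrite scal_abs_ofR. apply Rabs_R0. Qed.

Lemma scal_abs_one k : scal_abs k (scal_one k) = 1.
Proof. rewrite scal_one_ofR, scal_abs_ofR. apply Rabs_R1. Qed.

Lemma scal_abs_eq0 k (a : scal k) : scal_abs k a = 0 -> a = scal_zero k.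
Proof.
  destruct k; unfold scal_zero; simpl; intro H.
  - destruct (Req_dec a 0) as [|Ha]; [assumption|].
    exfalso. exact (Rabs_no_R0 a Ha H).
  - destruct a as [a1 a2]; simpl in *. apply sqrt_eq_0 in H; [f_equal; nra | nra].
Qed.

Lemma scal_invertible k (a : scal k) :
  a <> scal_zero k -> exists a', scal_mul k a' a = scal_one k.
Proof.
  destruct k; unfold scal_zero; simpl; intro H.
  - exists (/ a). field. exact H.
  - destruct a as [a1 a2].
    assert (Hn : a1 * a1 + a2 * a2 <> 0) by (intro H0; apply H; f_equal; nra).
    exists (a1 / (a1 * a1 + a2 * a2), - a2 / (a1 * a1 + a2 * a2)).
    simpl. f_equal; field; exact Hn.
Qed.

Lemma powp0 q : powp 0 q = 0.
Proof. unfold powp. destruct (Req_EM_T 0 0); [reflexivity | congruence]. Qed.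

Lemma powp_exp t q : 0 < t -> powp t q = exp (q * ln t).
Proof. intro H. unfold powp. destruct (Req_EM_T t 0); [lra | reflexivity]. Qed.

Lemma powp_ge0 t q : 0 <= powp t q.
Proof. unfold powp. destruct (Req_EM_T t 0); [lra | left; apply exp_pos]. Qed.

Lemma powp1 q : powp 1 q = 1.
Proof. rewrite powp_exp, ln_1, Rmult_0_r by lra. apply exp_0. Qed.

Lemma powp_mul s t q : 0 <= s -> 0 <= t -> powp (s * t) q = powp s q * powp t q.
Proof.
  intros Hs Ht.
  destruct (Req_dec s 0) as [->|]; [rewrite Rmult_0_l, powp0; ring|].
  destruct (Req_dec t 0) as [->|]; [rewrite Rmult_0_r, powp0; ring|].
  rewrite !powp_exp, ln_mult, <- exp_plus by nra. f_equal. ring.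
Qed.

Lemma powp_inv_mul_lt p r eps : 0 < p -> 0 <= r -> 0 < eps ->
  exists s, 0 < s /\ forall t, s < t -> powp (/ t) p * r < eps.
Proof.
  intros Hp Hr He. set (q := (r + 1) / eps).
  assert (Hq : 0 < q) by (unfold q; apply Rdiv_lt_0_compat; lra).
  exists (exp (ln q / p)). split; [apply exp_pos|]. intros t Ht.
  assert (Htp : 0 < t) by (pose proof (exp_pos (ln q / p)); lra).
  rewrite powp_exp, ln_Rinv by (try apply Rinv_0_lt_compat; exact Htp).
  assert (H1 : ln q / p < ln t)
    by (rewrite <- (ln_exp (ln q / p)); apply ln_increasing; [apply exp_pos | exact Ht]).
  assert (H2 : p * - ln t < - ln q).
  { apply (Rmult_lt_compat_l p) in H1; [|exact Hp]. unfold Rdiv in H1.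
    rewrite <- Rmult_assoc, (Rmult_comm p), Rmult_assoc, Rinv_r, Rmult_1_r in H1 by lra. lra. }
  apply exp_increasing in H2. rewrite exp_Ropp, exp_ln in H2 by exact Hq.
  replace (/ q) with (eps / (r + 1)) in H2 by (unfold q; field; lra).
  apply Rle_lt_trans with (eps / (r + 1) * r); [apply Rmult_le_compat_r; lra|].
  apply (Rmult_lt_reg_r (r + 1)); [lra|]. field_simplify; nra.
Qed.

Lemma inv_INR_succ_lt d : 0 < d -> exists n0, forall n, (n0 <= n)%nat -> / (INR n + 1) < d.
Proof.
  intro Hd. destruct (archimed (/ d)) as [Hup _].
  exists (Z.to_nat (up (/ d))). intros n Hn.
  assert (Hpos : 0 < / d) by (apply Rinv_0_lt_compat; exact Hd).
  assert (IZR (up (/ d)) <= INR n).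
  { rewrite INR_IZR_INZ. apply IZR_le.
    assert (0 <= up (/ d))%Z by (apply le_IZR; lra). lia. }
  rewrite <- (Rinv_inv d). apply Rinv_lt_contravar; [|lra].
  apply Rmult_lt_0_compat; [exact Hpos|]. pose proof (pos_INR n); lra.
Qed.

Lemma Rinv_lt_of_Rinv_lt d t : 0 < d -> / d < t -> 0 < t /\ / t < d.
Proof.
  intros Hd Ht. assert (Hid : 0 < / d) by (apply Rinv_0_lt_compat; exact Hd).
  split; [lra|]. rewrite <- (Rinv_inv d). apply Rinv_lt_contravar; [nra | exact Ht].
Qed.

Lemma exp_le_mono x y : x <= y -> exp x <= exp y.
Proof. intros [H|H]; [left; apply exp_increasing; exact H | right; rewrite H; reflexivity]. Qed.

Definition pow_negZ (c : R) (m : Z) : R := exp (- IZR m * ln c).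

Section PowNegZ.
Variable c : R.
Hypothesis Hc : 1 < c.

Lemma ln_base_gt0 : 0 < ln c.
Proof. rewrite <- ln_1. apply ln_increasing; lra. Qed.

Lemma pow_negZ_gt0 m : 0 < pow_negZ c m.
Proof. apply exp_pos. Qed.

Lemma pow_negZ_pred m : pow_negZ c (m - 1) = c * pow_negZ c m.
Proof.
  unfold pow_negZ. rewrite minus_IZR.
  replace (- (IZR m - 1) * ln c) with (ln c + - IZR m * ln c) by ring.
  rewrite exp_plus, exp_ln by lra. reflexivity.
Qed.

Lemma pow_negZ_le m n : (n <= m)%Z -> pow_negZ c m <= pow_negZ c n.
Proof.
  intro H. apply IZR_le in H. pose proof ln_base_gt0. apply exp_le_mono. nra.
Qed.

Lemma pow_negZ_lt_inv m n : pow_negZ c m < pow_negZ c n -> (n < m)%Z.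
Proof.
  unfold pow_negZ. intro H. apply exp_lt_inv in H. pose proof ln_base_gt0.
  apply lt_IZR. nra.
Qed.

Lemma pow_negZ_below t : 0 < t -> exists a, pow_negZ c (a - 1) <= t.
Proof.
  intro Ht. set (r := - ln t / ln c). destruct (archimed r) as [H1 H2].
  exists (up r + 1)%Z. unfold pow_negZ. replace (up r + 1 - 1)%Z with (up r) by lia.
  pose proof ln_base_gt0. rewrite <- (exp_ln t) by exact Ht. left. apply exp_increasing.
  replace (ln t) with (- r * ln c) by (unfold r; field; lra). nra.
Qed.

End PowNegZ.

Definition dyadic_exponent (C : R) : R := ln 2 / ln C.

Lemma dyadic_exponent_gt0 C : 2 <= C -> 0 < dyadic_exponent C.
Proof. intro HC. apply Rdiv_lt_0_compat; apply ln_base_gt0; lra. Qed.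

Lemma dyadic_exponent_le1 C : 2 <= C -> dyadic_exponent C <= 1.
Proof.
  intro HC. unfold dyadic_exponent. pose proof (ln_base_gt0 C ltac:(lra)) as HlnC.
  apply (Rmult_le_reg_r (ln C)); [exact HlnC|]. unfold Rdiv.
  rewrite Rmult_assoc, Rinv_l, Rmult_1_r, Rmult_1_l by lra.
  destruct (Req_dec C 2) as [->|]; [lra | left; apply ln_increasing; lra].
Qed.

(* The exponent is chosen so that [pow_negZ C m ^ dyadic_exponent C = pow_negZ 2 m]. *)
Lemma pow_negZ_round C t : 2 <= C -> 0 < t ->
  exists z, t <= pow_negZ C z /\ pow_negZ 2 z <= 2 * powp t (dyadic_exponent C).
Proof.
  intros HC Ht. set (r := - ln t / ln C). destruct (archimed r) as [H1 H2].
  pose proof (ln_base_gt0 C ltac:(lra)). pose proof (ln_base_gt0 2 ltac:(lra)).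
  exists (up r - 1)%Z. unfold pow_negZ. rewrite minus_IZR. split.
  - rewrite <- (exp_ln t) at 1 by exact Ht. apply exp_le_mono.
    replace (ln t) with (- r * ln C) by (unfold r; field; lra). nra.
  - rewrite powp_exp by exact Ht. rewrite <- (exp_ln 2) at 2 by lra.
    rewrite <- exp_plus. left. apply exp_increasing.
    replace (dyadic_exponent C * ln t) with (- r * ln 2)
      by (unfold r, dyadic_exponent; field; lra).
    nra.
Qed.

Definition is_glb (S : R -> Prop) (m : R) : Prop :=
  (forall r, S r -> m <= r) /\ (forall m', (forall r, S r -> m' <= r) -> m' <= m).

Lemma is_glb_exists (S : R -> Prop) :
  (exists r, S r) -> (forall r, S r -> 0 <= r) -> exists m, is_glb S m.
Proof.
  intros [r0 Hr0] Hpos. destruct (completeness (fun y => S (- y))) as [l [Hl1 Hl2]].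
  - exists 0. intros y Hy. specialize (Hpos _ Hy). lra.
  - exists (- r0). rewrite Ropp_involutive. exact Hr0.
  - exists (- l). split.
    + intros r Hr. assert (- r <= l); [apply Hl1; rewrite Ropp_involutive; exact Hr | lra].
    + intros m' Hm'. assert (l <= - m'); [|lra].
      apply Hl2. intros y Hy. specialize (Hm' _ Hy). lra.
Qed.

Lemma list_extract_min {A : Type} (l : list (A * Z)) : l <> nil ->
  exists e r, Permutation l (e :: r) /\ forall e', In e' r -> (snd e <= snd e')%Z.
Proof.
  induction l as [|x t IH]; intro Hne; [congruence|].
  destruct t as [|y t']; [exists x, nil; split; [reflexivity | intros _ []]|].
  destruct IH as (e & r & Hp & Hm); [discriminate|].
  destruct (Z_le_dec (snd x) (snd e)).
  - exists x, (y :: t'). split; [reflexivity|]. intros e' He'.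
    apply (Permutation_in _ Hp) in He'. destruct He' as [<-|He']; [lia|].
    specialize (Hm e' He'). lia.
  - exists e, (x :: r). split.
    + eapply perm_trans; [apply perm_skip; exact Hp | apply perm_swap].
    + intros e' [<-|He']; [lia | auto].
Qed.

Lemma list_dup_snd {A B : Type} (l : list (A * B)) : ~ NoDup (map snd l) ->
  exists e1 e2 r, Permutation l (e1 :: e2 :: r) /\ snd e1 = snd e2.
Proof.
  induction l as [|x t IH]; simpl; intro H; [exfalso; apply H; constructor|].
  destruct (classic (In (snd x) (map snd t))) as [Hin|Hnin].
  - apply in_map_iff in Hin. destruct Hin as (e2 & He2 & Hin).
    apply in_split in Hin. destruct Hin as (t1 & t2 & ->).
    exists x, e2, (t1 ++ t2). split; [|symmetry; exact He2].
    apply perm_skip. apply Permutation_sym, Permutation_middle.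
  - destruct IH as (e1 & e2 & r & Hp & He); [intro Hn; apply H; constructor; assumption|].
    exists e1, e2, (x :: r). split; [|exact He].
    eapply perm_trans; [apply perm_skip; exact Hp|].
    eapply perm_trans; [apply perm_swap | apply perm_skip; apply perm_swap].
Qed.

Section TopologicalVectorSpace.
Variables (k : field_choice) (E : Type) (add : E -> E -> E) (zero : E) (opp : E -> E)
  (smul : scal k -> E -> E) (is_open : (E -> Prop) -> Prop).
Hypothesis HE : is_tvs k E add zero opp smul is_open.

Local Notation vsub := (sub E add opp).
Local Notation is_bounded := (Defs.bounded k E zero smul is_open).
Local Notation converges := (seq_converges E is_open).

Lemma addA x y z : add x (add y z) = add (add x y) z.
Proof. apply HE. Qed.
Lemma addC x y : add x y = add y x.
Proof. apply HE. Qed.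
Lemma add0l x : add zero x = x.
Proof. apply HE. Qed.
Lemma addNl x : add (opp x) x = zero.
Proof. apply HE. Qed.
Lemma smulA a b x : smul (scal_mul k a b) x = smul a (smul b x).
Proof. apply HE. Qed.
Lemma smul1 x : smul (scal_one k) x = x.
Proof. apply HE. Qed.
Lemma smulDr a x y : smul a (add x y) = add (smul a x) (smul a y).
Proof. apply HE. Qed.
Lemma smulDl a b x : smul (scal_add k a b) x = add (smul a x) (smul b x).
Proof. apply HE. Qed.

Lemma add0r x : add x zero = x.
Proof. rewrite addC. apply add0l. Qed.
Lemma addNr x : add x (opp x) = zero.
Proof. rewrite addC. apply addNl. Qed.

Lemma addI a x y : add a x = add a y -> x = y.
Proof.
  intro H. rewrite <- (add0l x), <- (add0l y), <- (addNl a), <- !addA, H.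
  reflexivity.
Qed.

Lemma add_idem_eq0 x : add x x = x -> x = zero.
Proof. intro H. apply (addI x). rewrite H, add0r. reflexivity. Qed.

Lemma smul_scal_zero x : smul (scal_zero k) x = zero.
Proof. apply add_idem_eq0. rewrite <- smulDl, scal_add00. reflexivity. Qed.

Lemma smul_zero a : smul a zero = zero.
Proof. apply add_idem_eq0. rewrite <- smulDr, add0l. reflexivity. Qed.

Lemma opp_smul x : opp x = smul (scal_opp k (scal_one k)) x.
Proof.
  apply (addI x). rewrite addNr. rewrite <- (smul1 x) at 1.
  rewrite <- smulDl, scal_subrr, smul_scal_zero. reflexivity.
Qed.

Lemma smulC a b x : smul a (smul b x) = smul b (smul a x).
Proof. rewrite <- !smulA, scal_mulC. reflexivity. Qed.

Lemma smul_ofR_invK t x : t <> 0 -> smul (scal_ofR k t) (smul (scal_ofR k (/ t)) x) = x.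
Proof.
  intro H. rewrite <- smulA, scal_mul_ofR, Rinv_r, <- scal_one_ofR, smul1 by exact H.
  reflexivity.
Qed.

Lemma sub0r x : vsub x zero = x.
Proof. unfold sub. rewrite opp_smul, smul_zero. apply add0r. Qed.

Lemma subrr x : vsub x x = zero.
Proof. apply addNr. Qed.

Lemma addrBK x y : add x (vsub y x) = y.
Proof. unfold sub. rewrite (addC y), addA, addNr, add0l. reflexivity. Qed.

Lemma addKr x y : vsub (add x y) x = y.
Proof. unfold sub. rewrite (addC x y), <- addA, addNr, add0r. reflexivity. Qed.

Lemma subr_split z y x : vsub z x = add (vsub z y) (vsub y x).
Proof. unfold sub. rewrite <- addA, (addA (opp y)), addNl, add0l. reflexivity. Qed.

Lemma tvs_hausdorff : is_hausdorff E is_open.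
Proof. apply HE. Qed.
Lemma tvs_add_continuous : add_continuous E add is_open.
Proof. apply HE. Qed.
Lemma tvs_smul_continuous : smul_continuous k E smul is_open.
Proof. apply HE. Qed.

Lemma open_full : is_open (fun _ => True).
Proof. apply HE. Qed.

Lemma open_inter U V : is_open U -> is_open V -> is_open (fun x => U x /\ V x).
Proof. apply HE. Qed.

Lemma open_union (F : (E -> Prop) -> Prop) :
  (forall U, F U -> is_open U) -> is_open (fun x => exists U, F U /\ U x).
Proof. apply HE. Qed.

Lemma open_finite_inter (U : nat -> E -> Prop) m :
  (forall n, is_open (U n)) -> is_open (fun x => forall n, (n < m)%nat -> U n x).
Proof.
  intro HU. induction m as [|m IH].
  - replace (fun x : E => forall n, (n < 0)%nat -> U n x) with (fun _ : E => True)
      by (extensionality x; apply propositional_extensionality; split; intros; [lia | exact I]).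
    apply open_full.
  - replace (fun x : E => forall n, (n < S m)%nat -> U n x)
      with (fun x => (forall n, (n < m)%nat -> U n x) /\ U m x).
    + apply open_inter; [exact IH | apply HU].
    + extensionality x. apply propositional_extensionality. split.
      * intros [H1 H2] n Hn. destruct (Nat.eq_dec n m) as [->|]; [exact H2 | apply H1; lia].
      * intro H. split; [intros n Hn; apply H; lia | apply H; lia].
Qed.

Lemma smul_small_nbhd U : is_open U -> U zero ->
  exists d U', 0 < d /\ is_open U' /\ U' zero /\
    forall b u, scal_abs k b < d -> U' u -> U (smul b u).
Proof.
  intros HU H0.
  destruct (tvs_smul_continuous (scal_zero k) zero U HU)
    as (d & U' & Hd & HU' & H0' & H); [rewrite smul_zero; exact H0|].
  exists d, U'. repeat split; try assumption.
  intros b u Hb Hu. apply H; [rewrite scal_subr0; exact Hb | exact Hu].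
Qed.

Lemma nbhd_add_split U : is_open U -> U zero ->
  exists U1 U2, is_open U1 /\ is_open U2 /\ U1 zero /\ U2 zero /\
    forall u v, U1 u -> U2 v -> U (add u v).
Proof.
  intros HU H0. apply (tvs_add_continuous zero zero U HU).
  rewrite add0l. exact H0.
Qed.

Lemma nbhd_absorbing x U : is_open U -> U zero ->
  exists s, 0 < s /\ forall t, s < t -> exists u, U u /\ x = smul (scal_ofR k t) u.
Proof.
  intros HU H0.
  destruct (tvs_smul_continuous (scal_zero k) x U HU)
    as (d & P & Hd & HP & Px & H); [rewrite smul_scal_zero; exact H0|].
  exists (/ d). split; [apply Rinv_0_lt_compat; exact Hd|]. intros t Ht.
  destruct (Rinv_lt_of_Rinv_lt d t Hd Ht) as [Ht0 Hinv].
  exists (smul (scal_ofR k (/ t)) x). split.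
  - apply H; [|exact Px].
    rewrite scal_subr0, scal_abs_ofR, Rabs_right; [exact Hinv|].
    left. apply Rinv_0_lt_compat. exact Ht0.
  - rewrite smul_ofR_invK; [reflexivity | lra].
Qed.

Lemma bounded_small_smul B U : is_bounded B -> is_open U -> U zero ->
  exists del, 0 < del /\ forall b u, scal_abs k b <= del -> B u -> U (smul b u).
Proof.
  intros HB HU H0. destruct (smul_small_nbhd U HU H0) as (d & U' & Hd & HU' & H0' & H).
  destruct (HB U' HU' H0') as (s & Hs & Hs').
  exists (d / (2 * (s + 1))). split; [apply Rdiv_lt_0_compat; lra|].
  intros b u Hb Hu. destruct (Hs' (s + 1) ltac:(lra) u Hu) as (u' & Hu' & ->).
  rewrite <- smulA. apply H; [|exact Hu'].
  rewrite scal_abs_mul, scal_abs_ofR, Rabs_right by lra.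
  apply Rle_lt_trans with (d / (2 * (s + 1)) * (s + 1)).
  - apply Rmult_le_compat_r; lra.
  - field_simplify; lra.
Qed.

Lemma bounded_subset A B : is_bounded B -> (forall x, A x -> B x) -> is_bounded A.
Proof.
  intros HB HAB U HU H0. destruct (HB U HU H0) as (s & Hs & H).
  exists s. split; [exact Hs|]. intros t Ht b Hb. apply H; auto.
Qed.

Lemma bounded_union A B : is_bounded A -> is_bounded B -> is_bounded (fun x => A x \/ B x).
Proof.
  intros HA HB U HU H0.
  destruct (HA U HU H0) as (s1 & Hs1 & H1), (HB U HU H0) as (s2 & Hs2 & H2).
  exists (Rmax s1 s2). split; [apply Rlt_le_trans with s1; [exact Hs1 | apply Rmax_l]|].
  intros t Ht b [Hb|Hb]; apply Rmax_Rlt in Ht as [Ht1 Ht2]; auto.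
Qed.

Definition diff_set (A B : E -> Prop) (x : E) : Prop :=
  exists a b, A a /\ B b /\ x = vsub a b.

Lemma bounded_diff A B : is_bounded A -> is_bounded B -> is_bounded (diff_set A B).
Proof.
  intros HA HB U HU H0. destruct (nbhd_add_split U HU H0) as (U1 & U2 & o1 & o2 & z1 & z2 & H12).
  destruct (tvs_smul_continuous (scal_opp k (scal_one k)) zero U2 o2)
    as (d & U3 & Hd & o3 & z3 & H3); [rewrite smul_zero; exact z2|].
  destruct (HA U1 o1 z1) as (s1 & Hs1 & G1), (HB U3 o3 z3) as (s2 & Hs2 & G2).
  exists (Rmax s1 s2). split; [apply Rlt_le_trans with s1; [exact Hs1 | apply Rmax_l]|].
  intros t Ht x (a & b & Ha & Hb & ->). apply Rmax_Rlt in Ht as [Ht1 Ht2].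
  destruct (G1 t Ht1 a Ha) as (e1 & He1 & ->), (G2 t Ht2 b Hb) as (e3 & He3 & ->).
  exists (add e1 (smul (scal_opp k (scal_one k)) e3)). split.
  - apply H12; [exact He1|]. apply H3; [|exact He3]. rewrite scal_subrr, scal_abs_zero. exact Hd.
  - unfold sub. rewrite smulDr, opp_smul, smulC. reflexivity.
Qed.

Lemma bounded_singleton x : is_bounded (fun y => y = x).
Proof.
  intros U HU H0. destruct (nbhd_absorbing x U HU H0) as (S & HS & H).
  exists S. split; [exact HS|]. intros t Ht b ->. apply H. exact Ht.
Qed.

Lemma bounded_prefix (s : nat -> E) n : is_bounded (fun x => exists i, (i < n)%nat /\ x = s i).
Proof.
  induction n as [|n IH].
  - intros U _ _. exists 1. split; [lra|]. intros t _ b (i & Hi & _). lia.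
  - apply (bounded_subset _ _ (bounded_union _ _ IH (bounded_singleton (s n)))).
    intros x (i & Hi & ->). destruct (Nat.eq_dec i n) as [->|Hne]; [right; reflexivity|].
    left. exists i. split; [lia | reflexivity].
Qed.

Lemma bounded_null_seq (s : nat -> E) : converges s zero -> is_bounded (fun x => exists i, x = s i).
Proof.
  intros Hs U HU H0. destruct (smul_small_nbhd U HU H0) as (d & U' & Hd & HU' & H0' & HB).
  destruct (Hs U' HU' H0') as (i0 & Hi0).
  destruct (bounded_prefix s i0 U HU H0) as (S & HS & HSi).
  exists (Rmax S (/ d)). split; [apply Rlt_le_trans with S; [exact HS | apply Rmax_l]|].
  intros t Ht x (i & ->). apply Rmax_Rlt in Ht as [HtS Htd].
  destruct (lt_dec i i0) as [Hl|Hl]; [apply HSi; [exact HtS | exists i; auto]|].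
  destruct (Rinv_lt_of_Rinv_lt d t Hd Htd) as [Ht0 Hinv].
  exists (smul (scal_ofR k (/ t)) (s i)). split.
  - apply HB; [|apply Hi0; lia].
    rewrite scal_abs_ofR, Rabs_right; [exact Hinv|]. left. apply Rinv_0_lt_compat. exact Ht0.
  - rewrite smul_ofR_invK; [reflexivity | lra].
Qed.

Section PNormed.
Variables (p : R) (N : E -> R).
Hypotheses (Hp : 0 < p) (HN : is_p_norm k E add zero smul p N)
  (Htop : topology_generated_by E add opp is_open N).

Lemma p_norm_ge0 x : 0 <= N x.
Proof. apply HN. Qed.
Lemma p_norm0 : N zero = 0.
Proof. apply HN. reflexivity. Qed.
Lemma p_normZ a x : N (smul a x) = powp (scal_abs k a) p * N x.
Proof. apply HN. Qed.
Lemma p_normD x y : N (add x y) <= N x + N y.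
Proof. apply HN. Qed.

Lemma open_p_norm_ball x eps : is_open (fun y => N (vsub y x) < eps).
Proof.
  apply Htop. intros y Hy. exists (eps - N (vsub y x)). split; [lra|].
  intros z Hz. rewrite (subr_split z y x). pose proof (p_normD (vsub z y) (vsub y x)). lra.
Qed.

Lemma p_normed_frechet_urysohn : frechet_urysohn E is_open.
Proof.
  intros A x Hcl.
  assert (Hn : forall n : nat, exists y, N (vsub y x) < / (INR n + 1) /\ A y).
  { intro n. apply (Hcl _ (open_p_norm_ball x (/ (INR n + 1)))).
    rewrite subrr, p_norm0. apply Rinv_0_lt_compat. pose proof (pos_INR n); lra. }
  destruct (choice _ Hn) as [s Hs]. exists s. split; [intro n; apply Hs|].
  intros U HU Ux. destruct (proj1 (Htop U) HU x Ux) as (eps & He & Hb).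
  destruct (inv_INR_succ_lt eps He) as [n0 Hn0]. exists n0. intros n Hn'. apply Hb.
  specialize (Hn0 n Hn'). destruct (Hs n) as [Hsn _]. lra.
Qed.

Lemma p_norm_sublevel_bounded (n : nat) : is_bounded (fun x => N x <= INR n).
Proof.
  intros U HU H0. destruct (proj1 (Htop U) HU zero H0) as (eps & He & Hb).
  destruct (powp_inv_mul_lt p (INR n) eps Hp (pos_INR n) He) as (s & Hs & Hsp).
  exists s. split; [exact Hs|]. intros t Ht b Hb'.
  assert (Htp : 0 < t) by lra.
  exists (smul (scal_ofR k (/ t)) b). split.
  - apply Hb. rewrite sub0r, p_normZ, scal_abs_ofR, Rabs_right
      by (left; apply Rinv_0_lt_compat; exact Htp).
    apply Rle_lt_trans with (powp (/ t) p * INR n); [|apply Hsp; exact Ht].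
    apply Rmult_le_compat_l; [apply powp_ge0 | exact Hb'].
  - rewrite smul_ofR_invK; [reflexivity | lra].
Qed.

Lemma bounded_in_p_norm_sublevel B : is_bounded B -> exists n : nat, forall x, B x -> N x <= INR n.
Proof.
  intro HB.
  assert (Ho : is_open (fun y => N y < 1)).
  { replace (fun y => N y < 1) with (fun y => N (vsub y zero) < 1) by
      (extensionality y; rewrite sub0r; reflexivity).
    apply open_p_norm_ball. }
  destruct (HB _ Ho) as (s & Hs & H); [rewrite p_norm0; lra|].
  pose proof (powp_ge0 (s + 1) p) as Hc.
  destruct (archimed (powp (s + 1) p)) as [Hup _].
  assert (Hup0 : (0 <= up (powp (s + 1) p))%Z) by (apply le_IZR; lra).
  exists (Z.to_nat (up (powp (s + 1) p))). intros x Bx.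
  destruct (H (s + 1) ltac:(lra) x Bx) as (u & Hu & ->).
  rewrite p_normZ, scal_abs_ofR, Rabs_right by lra.
  rewrite INR_IZR_INZ, Z2Nat.id by exact Hup0. pose proof (p_norm_ge0 u).
  apply Rle_trans with (powp (s + 1) p * 1); [apply Rmult_le_compat_l; lra | lra].
Qed.

Lemma p_normed_fundamental_sequence :
  has_fundamental_sequence_of_bounded_sets k E zero smul is_open.
Proof.
  exists (fun n x => N x <= INR n). split.
  - exact p_norm_sublevel_bounded.
  - exact bounded_in_p_norm_sublevel.
Qed.

End PNormed.

Definition partial_union (B : nat -> E -> Prop) (n : nat) (x : E) : Prop :=
  exists i, (i <= n)%nat /\ B i x.

Lemma partial_union_bounded B n :
  (forall i, is_bounded (B i)) -> is_bounded (partial_union B n).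
Proof.
  intro HB. induction n as [|n IH].
  - apply (bounded_subset _ _ (HB 0%nat)). intros x (i & Hi & Hx).
    replace i with 0%nat in Hx by lia. exact Hx.
  - apply (bounded_subset _ _ (bounded_union _ _ IH (HB (S n)))). intros x (i & Hi & Hx).
    destruct (Nat.eq_dec i (S n)) as [->|]; [right; exact Hx|].
    left. exists i. split; [lia | exact Hx].
Qed.

Lemma partial_union_mono B m n x : (m <= n)%nat -> partial_union B m x -> partial_union B n x.
Proof. intros Hmn (i & Hi & Hx). exists i. split; [lia | exact Hx]. Qed.

Lemma nonzero_null_seq w : w <> zero ->
  exists v : nat -> E, (forall n, v n <> zero) /\ converges v zero.
Proof.
  intro Hw. exists (fun n => smul (scal_ofR k (/ (INR n + 1))) w).
  assert (Hn1 : forall n, 0 < INR n + 1) by (intro n; pose proof (pos_INR n); lra).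
  split.
  - intros n Hv. apply Hw.
    rewrite <- (smul_ofR_invK (INR n + 1) w), Hv by (specialize (Hn1 n); lra).
    apply smul_zero.
  - intros U HU H0.
    destruct (tvs_smul_continuous (scal_zero k) w U HU)
      as (d & P & Hd & HP & Pw & H); [rewrite smul_scal_zero; exact H0|].
    destruct (inv_INR_succ_lt d Hd) as [n0 Hn0]. exists n0. intros n Hn. apply H; [|exact Pw].
    rewrite scal_subr0, scal_abs_ofR, Rabs_right; [apply Hn0; exact Hn|].
    left. apply Rinv_0_lt_compat. apply Hn1.
Qed.

Section EscapeSet.
Variables (B : nat -> E -> Prop) (v : nat -> E) (U V : nat -> E -> Prop) (M0 : nat).

Definition escape_set (y : E) : Prop :=
  exists n, (M0 <= n)%nat /\ V n y /\ ~ diff_set (B n) (B n) (vsub y (v n)).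

Lemma escape_set_closure :
  (forall C, is_bounded C -> forall W, is_open W -> W zero -> exists x, W x /\ ~ C x) ->
  converges v zero -> (forall n, is_bounded (B n)) -> (forall n, is_open (V n) /\ V n (v n)) ->
  in_closure E is_open escape_set zero.
Proof.
  intros Hesc Hv HB HV W HW H0.
  destruct (nbhd_add_split W HW H0) as (W1 & W2 & o1 & o2 & z1 & z2 & H12).
  destruct (Hv W1 o1 z1) as [n0 Hn0]. set (n := Nat.max n0 M0).
  destruct (HV n) as [oV vV].
  destruct (tvs_add_continuous (v n) zero (V n) oV)
    as (P & Q & oP & oQ & Pv & Qz & HPQ); [rewrite add0r; exact vV|].
  destruct (Hesc _ (bounded_diff _ _ (HB n) (HB n)) (fun x => Q x /\ W2 x)
              (open_inter _ _ oQ o2) (conj Qz z2)) as (x & [Qx W2x] & nC).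
  exists (add (v n) x). split.
  - apply H12; [apply Hn0; lia | exact W2x].
  - exists n. split; [lia|]. split; [apply HPQ; assumption|]. rewrite addKr. exact nC.
Qed.

Lemma escape_set_no_null_seq :
  (forall C, is_bounded C -> exists m, forall x, C x -> B m x) ->
  (forall m n x, (m <= n)%nat -> B m x -> B n x) ->
  (forall n, (M0 <= n)%nat -> B n (v n)) ->
  (forall n, is_open (U n) /\ U n zero /\ forall z, U n z -> V n z -> False) ->
  forall s, (forall i, escape_set (s i)) -> ~ converges s zero.
Proof.
  intros Hcov Hmono HvB HU s sA sconv.
  destruct (Hcov _ (bounded_null_seq s sconv)) as [m Hm].
  destruct (sconv (fun x => forall n, (n < m)%nat -> U n x)) as [i0 Hi0].
  { apply open_finite_inter. intro n. apply HU. }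
  { intros n _. apply HU. }
  specialize (Hi0 i0 (le_n _)). destruct (sA i0) as (n & Hn & Vs & nC).
  destruct (lt_dec n m) as [Hl|Hl].
  - apply (proj2 (proj2 (HU n)) (s i0)); [apply Hi0; exact Hl | exact Vs].
  - apply nC. exists (s i0), (v n). repeat split.
    + apply (Hmono m); [lia | apply Hm; exists i0; reflexivity].
    + apply HvB. exact Hn.
Qed.

End EscapeSet.

Lemma bounded_nbhd_exists :
  frechet_urysohn E is_open -> has_fundamental_sequence_of_bounded_sets k E zero smul is_open ->
  exists U0, is_open U0 /\ U0 zero /\ is_bounded U0.
Proof.
  intros HFU [Bn [HBn HBcov]].
  apply NNPP. intro NOB.
  assert (Hesc : forall C, is_bounded C -> forall W, is_open W -> W zero -> exists x, W x /\ ~ C x).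
  { intros C HC W HW H0. apply NNPP. intro Hn. apply NOB.
    exists W. repeat split; [exact HW | exact H0|].
    apply (bounded_subset W C HC). intros x Hx. apply NNPP. intro HCx. apply Hn. exists x. auto. }
  destruct (Hesc (fun x => x = zero)) with (W := fun _ : E => True) as (w & _ & Hw).
  { apply bounded_singleton. } { exact open_full. } { exact I. }
  destruct (nonzero_null_seq w Hw) as (v & vne & vconv).
  set (B := partial_union Bn).
  destruct (HBcov _ (bounded_null_seq v vconv)) as [M0 HM0].
  assert (Hsep : forall n, exists UV : (E -> Prop) * (E -> Prop),
    (is_open (fst UV) /\ fst UV zero /\ forall z, fst UV z -> snd UV z -> False) /\
    (is_open (snd UV) /\ snd UV (v n))).
  { intro n. destruct (tvs_hausdorff zero (v n)) as (U & V & h1 & h2 & h3 & h4 & h5).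
    { intro Heq. apply (vne n). symmetry. exact Heq. }
    exists (U, V). simpl. auto. }
  destruct (choice _ Hsep) as [UV HUV].
  destruct (HFU (escape_set B v (fun n => snd (UV n)) M0) zero) as (s & sA & sconv).
  { apply escape_set_closure; [exact Hesc | exact vconv | |].
    - intro n. apply partial_union_bounded. exact HBn.
    - intro n. apply HUV. }
  apply (escape_set_no_null_seq B v (fun n => fst (UV n)) (fun n => snd (UV n)) M0) with s;
    [| intros m n x; apply partial_union_mono | | intro n; apply HUV | exact sA | exact sconv].
  - intros C HC. destruct (HBcov C HC) as [m Hm]. exists m. intros x Cx.
    exists m. split; [lia | apply Hm; exact Cx].
  - intros n Hn. exists M0. split; [exact Hn | apply HM0; exists n; reflexivity].
Qed.

Definition vsum {A : Type} (l : list (E * A)) : E := fold_right (fun e s => add (fst e) s) zero l.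

Lemma vsum_perm {A : Type} (l l' : list (E * A)) : Permutation l l' -> vsum l = vsum l'.
Proof.
  induction 1; simpl; [reflexivity | f_equal; assumption | | congruence].
  rewrite !addA, (addC (fst y)). reflexivity.
Qed.

Lemma vsum_app {A : Type} (l1 l2 : list (E * A)) : vsum (l1 ++ l2) = add (vsum l1) (vsum l2).
Proof. induction l1; simpl; [rewrite add0l | rewrite IHl1, addA]; reflexivity. Qed.

Section LocallyBounded.
Variable U0 : E -> Prop.
Hypotheses (oU0 : is_open U0) (zU0 : U0 zero) (bU0 : is_bounded U0).

Definition in_dilation (x : E) (t : R) : Prop :=
  exists b u, scal_abs k b <= t /\ U0 u /\ x = smul b u.

Lemma in_dilationZ a x t : in_dilation x t -> in_dilation (smul a x) (scal_abs k a * t).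
Proof.
  intros (b & u & Hb & Hu & ->). exists (scal_mul k a b), u. split; [|split; [exact Hu|]].
  - rewrite scal_abs_mul. apply Rmult_le_compat_l; [apply scal_abs_ge0 | exact Hb].
  - rewrite smulA. reflexivity.
Qed.

Lemma in_dilation_mono x t t' : in_dilation x t -> t <= t' -> in_dilation x t'.
Proof. intros (b & u & Hb & Hu & ->) H. exists b, u. split; [lra | auto]. Qed.

Lemma in_dilation_zero t : 0 <= t -> in_dilation zero t.
Proof.
  intro H. exists (scal_zero k), zero. rewrite scal_abs_zero, smul_scal_zero. auto.
Qed.

Lemma in_dilation0 x : in_dilation x 0 -> x = zero.
Proof.
  intros (b & u & Hb & Hu & ->). pose proof (scal_abs_ge0 k b).
  rewrite (scal_abs_eq0 k b) by lra. apply smul_scal_zero.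
Qed.

Lemma in_dilation_absorbing x : exists t, 0 < t /\ in_dilation x t.
Proof.
  destruct (nbhd_absorbing x U0 oU0 zU0) as (s & Hs & H).
  destruct (H (s + 1) ltac:(lra)) as (u & Hu & ->). exists (s + 1). split; [lra|].
  exists (scal_ofR k (s + 1)), u. rewrite scal_abs_ofR, Rabs_right by lra. auto with real.
Qed.

Lemma in_dilation_small U : is_open U -> U zero ->
  exists del, 0 < del /\ forall x t, t <= del -> in_dilation x t -> U x.
Proof.
  intros HU H0. destruct (bounded_small_smul U0 U bU0 HU H0) as (del & Hd & H).
  exists del. split; [exact Hd|]. intros x t Ht (b & u & Hb & Hu & ->). apply H; [lra | exact Hu].
Qed.

Lemma in_dilation_all_eq0 x : (forall t, 0 < t -> in_dilation x t) -> x = zero.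
Proof.
  intro H. apply NNPP. intro Hx.
  destruct (tvs_hausdorff zero x) as (U & V & oU & oV & Uz & Vx & disj);
    [intro Heq; apply Hx; symmetry; exact Heq|].
  destruct (in_dilation_small U oU Uz) as (del & Hd & G).
  apply (disj x); [|exact Vx]. apply (G x del); [lra | apply H; exact Hd].
Qed.

Lemma in_dilation_nbhd t x : 0 < t ->
  exists P, is_open P /\ P x /\ forall y, P y -> in_dilation (vsub y x) t.
Proof.
  intro Ht.
  destruct (tvs_smul_continuous (scal_ofR k (/ t)) zero U0 oU0)
    as (d & Q & Hd & oQ & Qz & HQ); [rewrite smul_zero; exact zU0|].
  destruct (tvs_add_continuous x (opp x) Q oQ)
    as (P & P' & oP & oP' & Px & P'x & HPP); [rewrite addNr; exact Qz|].
  exists P. split; [exact oP|]. split; [exact Px|]. intros y Py.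
  exists (scal_ofR k t), (smul (scal_ofR k (/ t)) (vsub y x)). split; [|split].
  - rewrite scal_abs_ofR, Rabs_right; lra.
  - apply HQ; [rewrite scal_subrr, scal_abs_zero; exact Hd | apply HPP; assumption].
  - rewrite smul_ofR_invK; [reflexivity | lra].
Qed.

Lemma in_dilation_quasi_triangle : exists C, 2 <= C /\
  forall x y t, 0 <= t -> in_dilation x t -> in_dilation y t -> in_dilation (add x y) (C * t).
Proof.
  destruct (nbhd_add_split U0 oU0 zU0) as (U1 & U2 & o1 & o2 & z1 & z2 & H12).
  destruct (bounded_small_smul U0 U1 bU0 o1 z1) as (d1 & Hd1 & G1).
  destruct (bounded_small_smul U0 U2 bU0 o2 z2) as (d2 & Hd2 & G2).
  set (d := Rmin (Rmin d1 d2) (1 / 2)).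
  assert (Hd : 0 < d) by (unfold d; repeat apply Rmin_glb_lt; lra).
  assert (Hdd : d <= d1 /\ d <= d2 /\ d <= 1 / 2).
  { unfold d. pose proof (Rmin_l (Rmin d1 d2) (1 / 2)). pose proof (Rmin_r (Rmin d1 d2) (1 / 2)).
    pose proof (Rmin_l d1 d2). pose proof (Rmin_r d1 d2). lra. }
  exists (/ d). split; [replace 2 with (/ (1 / 2)) by field; apply Rinv_le_contravar; lra|].
  intros x y t Ht Hx Hy. destruct (Req_dec t 0) as [->|Htn].
  { rewrite (in_dilation0 x Hx), (in_dilation0 y Hy), add0l. apply in_dilation_zero. lra. }
  assert (Htp : 0 < t) by lra. assert (Hdt : 0 < d / t) by (apply Rdiv_lt_0_compat; assumption).
  assert (Hsmall : forall b, scal_abs k b <= t ->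
    scal_abs k (scal_mul k (scal_ofR k (d / t)) b) <= d).
  { intros b Hb. rewrite scal_abs_mul, scal_abs_ofR, Rabs_right by lra.
    apply Rle_trans with (d / t * t); [apply Rmult_le_compat_l; lra | right; field; lra]. }
  destruct Hx as (b1 & u1 & Hb1 & Hu1 & ->), Hy as (b2 & u2 & Hb2 & Hu2 & ->).
  exists (scal_ofR k (t / d)),
    (add (smul (scal_ofR k (d / t)) (smul b1 u1)) (smul (scal_ofR k (d / t)) (smul b2 u2))).
  split; [|split].
  - rewrite scal_abs_ofR, Rabs_right; [unfold Rdiv; lra|]. left. apply Rdiv_lt_0_compat; assumption.
  - rewrite <- !smulA. apply H12.
    + apply G1; [apply Rle_trans with d; [apply Hsmall; exact Hb1 | lra] | exact Hu1].
    + apply G2; [apply Rle_trans with d; [apply Hsmall; exact Hb2 | lra] | exact Hu2].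
  - rewrite smulDr, <- !smulA, !scal_mul_ofR.
    replace (t / d * (d / t)) with 1 by (field; lra). rewrite <- scal_one_ofR, !scal_mul1l.
    reflexivity.
Qed.

Section QuasiNorm.
Variable C : R.
Hypotheses (HC2 : 2 <= C)
  (HCtri : forall x y t, 0 <= t ->
     in_dilation x t -> in_dilation y t -> in_dilation (add x y) (C * t)).

Local Notation level := (pow_negZ C).
Local Notation dyadic := (pow_negZ 2).

Definition leveled (l : list (E * Z)) : Prop :=
  forall e, In e l -> in_dilation (fst e) (level (snd e)).

Definition dyadic_weight (l : list (E * Z)) : R :=
  fold_right (fun e s => dyadic (snd e) + s) 0 l.

Lemma dyadic_weight_perm l l' : Permutation l l' -> dyadic_weight l = dyadic_weight l'.
Proof.
  induction 1; simpl; [reflexivity | rewrite IHPermutation | ring | congruence]; reflexivity.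
Qed.

Lemma dyadic_weight_ge0 l : 0 <= dyadic_weight l.
Proof. induction l; simpl; [lra|]. pose proof (pow_negZ_gt0 2 (snd a)). lra. Qed.

Lemma dyadic_weight_ge_In e l : In e l -> dyadic (snd e) <= dyadic_weight l.
Proof.
  induction l as [|a l IH]; simpl; [intros []|].
  pose proof (dyadic_weight_ge0 l). pose proof (pow_negZ_gt0 2 (snd a)).
  intros [<-|Hin]; [lra | specialize (IH Hin); lra].
Qed.

Lemma in_level_add x y m :
  in_dilation x (level m) -> in_dilation y (level m) -> in_dilation (add x y) (level (m - 1)).
Proof.
  intros. rewrite pow_negZ_pred by lra.
  apply HCtri; [left; apply pow_negZ_gt0 | |]; assumption.
Qed.

(* Adding distinct levels from the lowest one up telescopes the quasi-triangle inequality. *)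
Lemma distinct_levels_sum l b : NoDup (map snd l) -> leveled l ->
  (forall e, In e l -> (b <= snd e)%Z) ->
  in_dilation (vsum l) (level (b - 1)) /\ dyadic_weight l < dyadic (b - 1).
Proof.
  revert b.
  induction l as [l IH] using (well_founded_induction (well_founded_ltof _ (@length (E * Z)))).
  intros b Hnd Hv Hb. destruct l as [|x t].
  { simpl. split; [apply in_dilation_zero; left | ]; apply pow_negZ_gt0; lra. }
  destruct (list_extract_min (x :: t)) as (e & r & Hp & Hm); [discriminate|].
  pose proof (Permutation_NoDup (Permutation_map snd Hp) Hnd) as Hnd'.
  simpl in Hnd'. apply NoDup_cons_iff in Hnd' as [Hni Hnd'].
  assert (Hin : forall e', In e' (e :: r) -> In e' (x :: t))
    by (intros e' He'; apply (Permutation_in _ (Permutation_sym Hp)); exact He').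
  destruct (IH r ltac:(apply Permutation_length in Hp; unfold ltof; simpl in *; lia)
                (snd e + 1)%Z Hnd')
    as [IH1 IH2].
  { intros e' He'. apply Hv, Hin. right. exact He'. }
  { intros e' He'. specialize (Hm e' He'). assert (snd e' <> snd e); [|lia].
    intro Heq. apply Hni. rewrite <- Heq. apply in_map. exact He'. }
  replace (snd e + 1 - 1)%Z with (snd e) in * by lia.
  rewrite (vsum_perm _ _ Hp), (dyadic_weight_perm _ _ Hp). simpl.
  specialize (Hb e (Hin e (or_introl eq_refl))). split.
  - apply in_dilation_mono with (level (snd e - 1)).
    + apply in_level_add; [apply Hv, Hin; left; reflexivity | exact IH1].
    + apply pow_negZ_le; lra || lia.
  - apply Rlt_le_trans with (dyadic (snd e - 1)).
    + rewrite pow_negZ_pred by lra. lra.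
    + apply pow_negZ_le; lra || lia.
Qed.

(* Two equal levels merge into the next one without changing the dyadic weight. *)
Lemma leveled_sum l a : leveled l -> (forall e, In e l -> (a <= snd e)%Z) ->
  dyadic_weight l < dyadic (a - 1) -> in_dilation (vsum l) (level (a - 1)).
Proof.
  induction l as [l IH] using (well_founded_induction (well_founded_ltof _ (@length (E * Z)))).
  intros Hv Ha Hw. destruct (classic (NoDup (map snd l))) as [Hnd|Hnd].
  { apply (distinct_levels_sum l a); assumption. }
  destruct (list_dup_snd l Hnd) as (e1 & e2 & r & Hp & He).
  assert (Hin : forall e, In e (e1 :: e2 :: r) -> In e l)
    by (intros e H; apply (Permutation_in _ (Permutation_sym Hp)); exact H).
  rewrite (dyadic_weight_perm _ _ Hp) in Hw. simpl in Hw. rewrite He in Hw.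
  assert (Ha2 : (a < snd e2)%Z).
  { assert (Hlt : dyadic (snd e2 - 1) < dyadic (a - 1)).
    { rewrite pow_negZ_pred by lra. pose proof (dyadic_weight_ge0 r). lra. }
    apply (pow_negZ_lt_inv 2 ltac:(lra)) in Hlt. lia. }
  rewrite (vsum_perm _ _ Hp). simpl. rewrite addA.
  apply (IH ((add (fst e1) (fst e2), (snd e2 - 1)%Z) :: r)).
  - apply Permutation_length in Hp. unfold ltof. simpl in *. lia.
  - intros e [<-|H]; [|apply Hv, Hin; right; right; exact H].
    simpl. rewrite <- He. apply in_level_add; [|rewrite He]; apply Hv, Hin; simpl; auto.
  - intros e [<-|H]; [simpl; lia | apply Ha, Hin; right; right; exact H].
  - simpl. rewrite pow_negZ_pred by lra. lra.
Qed.

Local Notation exponent := (dyadic_exponent C).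

Definition decomposition (l : list (E * R)) : Prop :=
  forall e, In e l -> 0 <= snd e /\ in_dilation (fst e) (snd e).

Definition pweight (l : list (E * R)) : R :=
  fold_right (fun e s => powp (snd e) exponent + s) 0 l.

Lemma pweight_ge0 l : 0 <= pweight l.
Proof. induction l; simpl; [lra|]. pose proof (powp_ge0 (snd a) exponent). lra. Qed.

Lemma pweight_app l1 l2 : pweight (l1 ++ l2) = pweight l1 + pweight l2.
Proof. induction l1; simpl; [|rewrite IHl1]; ring. Qed.

Lemma decomposition_app l1 l2 : decomposition l1 -> decomposition l2 -> decomposition (l1 ++ l2).
Proof. intros H1 H2 e He. apply in_app_or in He as [He|He]; auto. Qed.

Lemma decomposition_leveled l : decomposition l ->
  exists l', leveled l' /\ vsum l' = vsum l /\ dyadic_weight l' <= 2 * pweight l.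
Proof.
  induction l as [|[x t] rest IH]; intro Hv.
  - exists nil. simpl. split; [intros e []|]. split; [reflexivity | lra].
  - destruct IH as (l' & Hv' & Hs & Hw); [intros e He; apply Hv; right; exact He|].
    destruct (Hv (x, t) (or_introl eq_refl)) as [Ht Hx]. simpl in Ht, Hx.
    destruct (Req_dec t 0) as [->|Htn].
    + exists l'. simpl. rewrite (in_dilation0 x Hx), add0l, powp0.
      split; [exact Hv'|]. split; [exact Hs | lra].
    + destruct (pow_negZ_round C t HC2 ltac:(lra)) as (z & Hz1 & Hz2).
      exists ((x, z) :: l'). split; [|split].
      * intros e [<-|He]; [apply in_dilation_mono with t; assumption | apply Hv'; exact He].
      * simpl. congruence.
      * simpl. lra.
Qed.

Lemma decomposition_sum l a : decomposition l -> pweight l < dyadic a ->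
  in_dilation (vsum l) (level (a - 1)).
Proof.
  intros Hv Hw. destruct (decomposition_leveled l Hv) as (l' & Hv' & <- & Hw').
  assert (Hlt : dyadic_weight l' < dyadic (a - 1)) by (rewrite pow_negZ_pred; lra).
  apply leveled_sum; [exact Hv' | | exact Hlt].
  intros e He. pose proof (dyadic_weight_ge_In e l' He).
  assert (Hlt' : dyadic (snd e) < dyadic (a - 1)) by lra.
  apply (pow_negZ_lt_inv 2 ltac:(lra)) in Hlt'. lia.
Qed.

Definition decomposition_weight (x : E) (r : R) : Prop :=
  exists l, decomposition l /\ vsum l = x /\ r = pweight l.

Definition pnorm (x : E) : R := epsilon (inhabits 0) (is_glb (decomposition_weight x)).

Lemma pnorm_spec x : is_glb (decomposition_weight x) (pnorm x).
Proof.
  unfold pnorm. apply epsilon_spec, is_glb_exists.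
  - destruct (in_dilation_absorbing x) as (t & Ht & Hx).
    exists (pweight ((x, t) :: nil)), ((x, t) :: nil). split; [|split; [apply add0r | reflexivity]].
    intros e [<-|[]]. simpl. split; [lra | exact Hx].
  - intros r (l & _ & _ & ->). apply pweight_ge0.
Qed.

Lemma pnorm_le_pweight l : decomposition l -> pnorm (vsum l) <= pweight l.
Proof. intro Hv. apply (proj1 (pnorm_spec (vsum l))). exists l. auto. Qed.

Lemma pnorm_ge_lower_bound x m : (forall l, decomposition l -> vsum l = x -> m <= pweight l) ->
  m <= pnorm x.
Proof. intro H. apply (proj2 (pnorm_spec x)). intros r (l & Hv & Hs & ->). apply H; assumption. Qed.

Lemma pnorm_lt_witness x r : pnorm x < r ->
  exists l, decomposition l /\ vsum l = x /\ pweight l < r.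
Proof.
  intro H. apply NNPP. intro Hn. apply (Rlt_not_le _ _ H). apply pnorm_ge_lower_bound.
  intros l Hv Hs. apply Rnot_lt_le. intro Hlt. apply Hn. exists l. auto.
Qed.

Lemma pnorm_ge0 x : 0 <= pnorm x.
Proof. apply pnorm_ge_lower_bound. intros l _ _. apply pweight_ge0. Qed.

Lemma pnorm_small x a : pnorm x < dyadic a -> in_dilation x (level (a - 1)).
Proof.
  intro H. destruct (pnorm_lt_witness x _ H) as (l & Hv & <- & Hw).
  apply decomposition_sum; assumption.
Qed.

Lemma pnorm_zero : pnorm zero = 0.
Proof.
  apply Rle_antisym; [|apply pnorm_ge0].
  apply (pnorm_le_pweight nil). intros e [].
Qed.

Lemma pnorm_eq0 x : pnorm x = 0 -> x = zero.
Proof.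
  intro H. apply in_dilation_all_eq0. intros t Ht.
  destruct (pow_negZ_below C ltac:(lra) t Ht) as [a Ha].
  apply in_dilation_mono with (level (a - 1)); [|exact Ha].
  apply pnorm_small. rewrite H. apply pow_negZ_gt0.
Qed.

Definition scale_decomposition a (l : list (E * R)) : list (E * R) :=
  map (fun e => (smul a (fst e), scal_abs k a * snd e)) l.

Lemma scale_decomposition_valid a l : decomposition l -> decomposition (scale_decomposition a l).
Proof.
  intros Hv e He. apply in_map_iff in He as (e0 & <- & He0). destruct (Hv e0 He0). simpl.
  split; [apply Rmult_le_pos; [apply scal_abs_ge0 | assumption] | apply in_dilationZ; assumption].
Qed.

Lemma vsum_scale a l : vsum (scale_decomposition a l) = smul a (vsum l).
Proof. induction l; simpl; [rewrite smul_zero | rewrite IHl, smulDr]; reflexivity. Qed.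

Lemma pweight_scale a l : decomposition l ->
  pweight (scale_decomposition a l) = powp (scal_abs k a) exponent * pweight l.
Proof.
  induction l as [|e l IH]; simpl; intro Hv; [ring|].
  rewrite IH, powp_mul; [ring | apply scal_abs_ge0 | apply (Hv e); left; reflexivity |].
  intros e' He'. apply Hv. right. exact He'.
Qed.

Lemma pnormZ_le a x : pnorm (smul a x) <= powp (scal_abs k a) exponent * pnorm x.
Proof.
  destruct (Req_dec (scal_abs k a) 0) as [Ha|Ha].
  { rewrite Ha, powp0, (scal_abs_eq0 k a Ha), smul_scal_zero, pnorm_zero. lra. }
  assert (Hc : 0 < powp (scal_abs k a) exponent).
  { rewrite powp_exp; [apply exp_pos|]. pose proof (scal_abs_ge0 k a). lra. }
  apply (Rmult_le_reg_r (/ powp (scal_abs k a) exponent)); [apply Rinv_0_lt_compat; exact Hc|].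
  replace (powp (scal_abs k a) exponent * pnorm x * / powp (scal_abs k a) exponent)
    with (pnorm x) by (field; lra).
  apply pnorm_ge_lower_bound. intros l Hv <-.
  apply (Rmult_le_reg_r (powp (scal_abs k a) exponent)); [exact Hc|].
  rewrite Rmult_assoc, Rinv_l, Rmult_1_r, Rmult_comm by lra.
  rewrite <- pweight_scale, <- vsum_scale by exact Hv.
  apply pnorm_le_pweight, scale_decomposition_valid. exact Hv.
Qed.

Lemma pnormZ a x : pnorm (smul a x) = powp (scal_abs k a) exponent * pnorm x.
Proof.
  apply Rle_antisym; [apply pnormZ_le|].
  destruct (classic (a = scal_zero k)) as [->|Ha].
  { rewrite scal_abs_zero, powp0, smul_scal_zero, pnorm_zero. lra. }
  destruct (scal_invertible k a Ha) as [a' Ha'].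
  assert (Hp : powp (scal_abs k a) exponent * powp (scal_abs k a') exponent = 1).
  { rewrite <- powp_mul, <- scal_abs_mul, scal_mulC, Ha', scal_abs_one by apply scal_abs_ge0.
    apply powp1. }
  pose proof (pnormZ_le a' (smul a x)) as Hle.
  rewrite <- smulA, Ha', smul1 in Hle.
  pose proof (powp_ge0 (scal_abs k a) exponent).
  apply Rle_trans
    with (powp (scal_abs k a) exponent * (powp (scal_abs k a') exponent * pnorm (smul a x))).
  - apply Rmult_le_compat_l; assumption.
  - rewrite <- Rmult_assoc, Hp. lra.
Qed.

Lemma pnormD x y : pnorm (add x y) <= pnorm x + pnorm y.
Proof.
  assert (pnorm (add x y) - pnorm y <= pnorm x); [|lra].
  apply pnorm_ge_lower_bound. intros l1 Hv1 <-.
  assert (pnorm (add (vsum l1) y) - pweight l1 <= pnorm y); [|lra].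
  apply pnorm_ge_lower_bound. intros l2 Hv2 <-.
  rewrite <- vsum_app. pose proof (pnorm_le_pweight (l1 ++ l2) (decomposition_app _ _ Hv1 Hv2)).
  rewrite pweight_app in H. lra.
Qed.

Lemma pnorm_is_p_norm : is_p_norm k E add zero smul exponent pnorm.
Proof.
  split; [exact pnorm_ge0|]. split; [|split; [exact pnormZ | exact pnormD]].
  intro x. split; [apply pnorm_eq0 | intros ->; apply pnorm_zero].
Qed.

Lemma pnorm_ball_in_nbhd U x : is_open U -> U x ->
  exists eps, 0 < eps /\ forall y, pnorm (vsub y x) < eps -> U y.
Proof.
  intros HU Ux. destruct (tvs_add_continuous x zero U HU)
    as (P & Q & oP & oQ & Px & Qz & HPQ); [rewrite add0r; exact Ux|].
  destruct (in_dilation_small Q oQ Qz) as (del & Hd & G).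
  destruct (pow_negZ_below C ltac:(lra) del Hd) as [a Ha].
  exists (dyadic a). split; [apply pow_negZ_gt0|]. intros y Hy. rewrite <- (addrBK x y).
  apply HPQ; [exact Px|]. apply (G _ (level (a - 1))); [exact Ha|]. apply pnorm_small. exact Hy.
Qed.

Lemma nbhd_in_pnorm_ball x eps : 0 < eps ->
  exists P, is_open P /\ P x /\ forall y, P y -> pnorm (vsub y x) < eps.
Proof.
  intro He. set (t := Rpower (eps / 2) (/ exponent)). pose proof (dyadic_exponent_gt0 C HC2).
  assert (Ht : 0 < t) by apply exp_pos.
  assert (Htp : powp t exponent = eps / 2).
  { rewrite powp_exp by exact Ht. change (Rpower t exponent = eps / 2). unfold t.
    rewrite Rpower_mult, Rinv_l, Rpower_1; lra. }
  destruct (in_dilation_nbhd t x Ht) as (P & oP & Px & HP). exists P. split; [exact oP|].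
  split; [exact Px|]. intros y Py.
  pose proof (pnorm_le_pweight ((vsub y x, t) :: nil)) as Hle. simpl in Hle.
  rewrite add0r in Hle. apply Rle_lt_trans with (powp t exponent + 0); [|lra].
  apply Hle. intros e [<-|[]]. simpl. split; [lra | apply HP; exact Py].
Qed.

Lemma pnorm_generates_topology : topology_generated_by E add opp is_open pnorm.
Proof.
  intro U. split; [intros HU x Ux; apply pnorm_ball_in_nbhd; assumption|].
  intro H. replace U with (fun x => exists P, (is_open P /\ forall z, P z -> U z) /\ P x).
  - apply open_union. intros P [HP _]. exact HP.
  - extensionality x. apply propositional_extensionality. split.
    + intros (P & [_ HP] & Px). apply HP. exact Px.
    + intro Ux. destruct (H x Ux) as (eps & He & Hb).
      destruct (nbhd_in_pnorm_ball x eps He) as (P & oP & Px & HP).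
      exists P. split; [split; [exact oP|] | exact Px]. intros y Py. apply Hb, HP. exact Py.
Qed.

End QuasiNorm.

Lemma locally_bounded_p_normed : p_normed k E add zero opp smul is_open.
Proof.
  destruct in_dilation_quasi_triangle as (C & HC & Htri).
  exists (dyadic_exponent C), (pnorm C).
  split; [apply dyadic_exponent_gt0; exact HC|]. split; [apply dyadic_exponent_le1; exact HC|].
  split; [apply pnorm_is_p_norm | apply pnorm_generates_topology]; assumption.
Qed.

End LocallyBounded.

End TopologicalVectorSpace.

Theorem mainTheorem6 (k : field_choice) (E : Type)
  (add : E -> E -> E) (zero : E) (opp : E -> E) (smul : scal k -> E -> E)
  (is_open : (E -> Prop) -> Prop)
  (HE : is_tvs k E add zero opp smul is_open) :
  p_normed k E add zero opp smul is_open <->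
  (frechet_urysohn E is_open /\
   has_fundamental_sequence_of_bounded_sets k E zero smul is_open).
Proof.
  split.
  - intros (p & N & Hp & _ & HN & Htop). split.
    + eapply p_normed_frechet_urysohn; eassumption.
    + eapply p_normed_fundamental_sequence; eassumption.
  - intros [HFU Hfund].
    destruct (bounded_nbhd_exists k E add zero opp smul is_open HE HFU Hfund)
      as (U0 & oU0 & zU0 & bU0).
    eapply locally_bounded_p_normed; eassumption.
Qed.
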